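(* For all $n,k \in \mathbb{N}$ with $n \geq k$, the integer $k!\,c_{n,k}$ is a multiple of $q_{n,k}$ (equivalently, $c_{n,k}$ is a multiple of the rational number $q_{n,k}/k!$, i.e. $c_{n,k}k!/q_{n,k} \in \mathbb{Z}$).
   Context: For $n \in \mathbb{N}$, $E_n$ denotes the set of polynomials $P \in \mathbb{C}[X]$ of degree $\leq n$ (including the zero polynomial) such that $P(\mathbb{Z}) \subset \mathbb{Z}$. For $n,k \in \mathbb{N}$, $c_{n,k}$ is the smallest positive integer such that $c_{n,k} P^{(k)} \in E_n$ for every $P \in E_n$, where $P^{(k)}$ is the $k$-th derivative. For $n,k \in \mathbb{N}$ with $n \geq k$, $$q_{n,k} = \mathrm{lcm}\{i_1 i_2 \cdots i_k : i_1,\dots,i_k \in \mathbb{N}^*,\ i_1+\dots+i_k \leq n\},$$ with the convention $q_{n,0} = 1$; $\mathbb{N}^*$ denotes the positive integers. *)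

From HB Require Import structures.
From mathcomp Require Import all_boot all_order all_algebra all_field.
Set Implicit Arguments. Unset Strict Implicit. Unset Printing Implicit Defensive.
Import Order.TTheory GRing.Theory Num.Theory.
Local Open Scope ring_scope.

(* E_n : polynomials of degree <= n (zero polynomial included) mapping Z into Z *)
Definition inE (n : nat) (P : {poly algC}) : Prop :=
  (size P <= n.+1)%N /\ forall z : int, P.[z%:~R] \is a Num.int.

Definition c_adm (n k c : nat) : Prop :=
  forall P : {poly algC}, inE n P -> inE n (c%:R *: P^`(k)).

Definition is_c (n k c : nat) : Prop :=
  (0 < c)%N /\ c_adm n k c /\ forall c', (0 < c')%N -> c_adm n k c' -> (c <= c')%N.

(* q_{n,k} = lcm { i_1 ... i_k : i_j >= 1, i_1 + ... + i_k <= n }; q_{n,0} = 1 *)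
Definition q (n k : nat) : nat :=
  \big[lcmn/1%N]_(t : k.-tuple 'I_n.+1 |
        all (fun i : 'I_n.+1 => (0 < i)%N) t && (\sum_(i <- t) (i : nat) <= n)%N)
     \prod_(i <- t) (i : nat).

(* Let i_1, ..., i_k be positive with i_1 + ... + i_k <= n.  The product P of
   the binomial polynomials binom(X + i_j - 1, i_j) is integer valued of degree
   at most n.  Each factor vanishes at 0 with slope 1/i_j, so P starts with
   X^k / (i_1 ... i_k), and the integer c P^(k)(0) equals c k! / (i_1 ... i_k).
   Hence every such product divides k! c, and so does their lcm q_{n,k}. *)
From HB Require Import structures.
From mathcomp Require Import all_boot all_order all_algebra all_field.
From mathcomp Require Import zify ring.
Set Implicit Arguments. Unset Strict Implicit. Unset Printing Implicit Defensive.
Import Order.TTheory GRing.Theory Num.Theory.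
Local Open Scope ring_scope.

(* Up to sign the product is a falling factorial of length i, or it contains
   the factor 0 when z <= 0 < z + i. *)
Lemma fact_dvdz_rising_prod (z : int) (i : nat) :
  ((i`!)%:Z %| \prod_(j < i) (z + (j : nat)%:Z))%Z.
Proof.
rewrite dvdzE (big_morph absz abszM (erefl _)) /=.
case: z => [w|m].
- case: i => [|i]; first by rewrite big_ord0.
  rewrite (reindex_inj rev_ord_inj) /=.
  rewrite (eq_bigr (fun j : 'I_i.+1 => (w + i) - j)%N); last first.
    by move=> j _; rewrite /= subSS; have := ltn_ord j; lia.
  by rewrite -ffact_prod -bin_ffact dvdn_mull.
- case: (leqP i m.+1) => [le_i_m|lt_m_i].
  + rewrite (eq_bigr (fun j : 'I_i => m.+1 - j)%N); last first.
      by move=> j _; have := ltn_ord j; rewrite NegzE; lia.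
    by rewrite -ffact_prod -bin_ffact dvdn_mull.
  + rewrite (bigD1 (Ordinal lt_m_i)) //= NegzE addNr.
    by rewrite mul0n dvdn0.
Qed.

Lemma dvdn_of_int_ratio (R : archiNumFieldType) (m d : nat) :
  (0 < d)%N -> (m%:R / d%:R : R) \is a Num.int -> (d %| m)%N.
Proof.
move=> d_gt0 ratio_int.
have d_neq0 : (d%:R : R) != 0 by rewrite pnatr_eq0 -lt0n.
have /natrP [N ratioE] : (m%:R / d%:R : R) \is a Num.nat.
  by rewrite natrEint ratio_int divr_ge0 ?ler0n.
have /eqP : (m%:R : R) = (N * d)%N%:R by rewrite natrM -ratioE divfK.
by rewrite eqr_nat => /eqP ->; apply: dvdn_mull.
Qed.

Lemma coefXn_prod_mulX (R : comNzRingType) (T : Type) (s : seq T)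
    (F : T -> {poly R}) :
  (\prod_(x <- s) ('X * F x))`_(size s) = \prod_(x <- s) (F x).[0].
Proof.
have -> : \prod_(x <- s) ('X * F x) = 'X^(size s) * \prod_(x <- s) F x.
  elim: s => [|a s IH]; first by rewrite !big_nil mulr1.
  by rewrite !big_cons IH exprS mulrACA.
by rewrite coefXnM ltnn subnn -horner_coef0 horner_prod.
Qed.

(* [rising_binom i] is binom(X + i - 1, i). *)
Definition rising_binom (i : nat) : {poly algC} :=
  (i`!%:R)^-1 *: \prod_(j < i) ('X + j%:R%:P).

Definition rising_binom_divX (i : nat) : {poly algC} :=
  (i`!%:R)^-1 *: \prod_(j < i.-1) ('X + j.+1%:R%:P).

Lemma rising_binomE (i : nat) :
  (0 < i)%N -> rising_binom i = 'X * rising_binom_divX i.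
Proof.
case: i => // i _.
by rewrite /rising_binom /rising_binom_divX big_ord_recl /= addr0 -scalerAr.
Qed.

Lemma rising_binom_divX0 (i : nat) :
  (0 < i)%N -> (rising_binom_divX i).[0] = i%:R^-1.
Proof.
case: i => // i _; rewrite /rising_binom_divX hornerZ horner_prod /=.
under eq_bigr do rewrite hornerD hornerX hornerC add0r.
rewrite -natr_prod.
have -> : (\prod_(j < i) j.+1)%N = i`! by rewrite fact_prod big_add1 big_mkord.
rewrite factS natrM invfM -mulrA mulVf ?mulr1 //.
by rewrite pnatr_eq0 -lt0n fact_gt0.
Qed.

Lemma size_rising_binom (i : nat) : (size (rising_binom i) <= i.+1)%N.
Proof.
apply: leq_trans (size_scale_leq _ _) _.
elim: i => [|i IH]; first by rewrite big_ord0 size_poly1.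
rewrite big_ord_recr /=; apply: leq_trans (size_polyMleq _ _) _.
by rewrite size_XaddC addn2 ltnS.
Qed.

Lemma rising_binom_int (i : nat) (z : int) :
  (rising_binom i).[z%:~R] \is a Num.int.
Proof.
rewrite /rising_binom hornerZ horner_prod.
under eq_bigr do rewrite hornerD hornerX hornerC.
have -> : \prod_(j < i) (z%:~R + j%:R) = (\prod_(j < i) (z + j%:Z))%:~R :> algC.
  by rewrite rmorph_prod; apply: eq_bigr => j _; rewrite rmorphD.
rewrite -(divzK (fact_dvdz_rising_prod z i)) intrM mulrC -mulrA.
have -> : ((i`!)%:Z%:~R : algC) = (i`!)%:R by [].
by rewrite mulfV ?mulr1 ?intr_int // pnatr_eq0 -lt0n fact_gt0.
Qed.

Lemma inE_prod_rising_binom (n : nat) (s : seq nat) :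
  (\sum_(i <- s) i <= n)%N -> inE n (\prod_(i <- s) rising_binom i).
Proof.
move=> sum_le_n; split => [|z].
  rewrite (leq_trans _ (sum_le_n : (_ < n.+1)%N)) //.
  elim: s {sum_le_n} => [|a s IH]; first by rewrite !big_nil size_poly1.
  rewrite !big_cons; apply: leq_trans (size_polyMleq _ _) _.
  by have := size_rising_binom a; lia.
by rewrite horner_prod rpred_prod // => i _; apply: rising_binom_int.
Qed.

Lemma c_adm_coef_int (n k c : nat) (P : {poly algC}) :
  c_adm n k c -> inE n P -> (k`! * c)%N%:R * P`_k \is a Num.int.
Proof.
move=> c_admissible /c_admissible [_ /(_ 0)].
rewrite hornerZ horner_coef0 coef_derivn addn0 ffactnn.
suff -> : (k`! * c)%N%:R * P`_k = c%:R * (P`_k *+ k`!) by [].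
by rewrite natrM; ring.
Qed.

Lemma prod_dvd_fact_c (n k c : nat) (s : seq nat) :
  c_adm n k c -> size s = k -> all (fun i => 0 < i)%N s ->
  (\sum_(i <- s) i <= n)%N -> (\prod_(i <- s) i %| k`! * c)%N.
Proof.
move=> c_admissible size_s s_pos sum_le_n.
have := c_adm_coef_int c_admissible (inE_prod_rising_binom sum_le_n).
rewrite (eq_big_seq (fun i => 'X * rising_binom_divX i)); last first.
  by move=> i /(allP s_pos) i_pos; apply: rising_binomE.
rewrite -size_s coefXn_prod_mulX size_s.
rewrite (eq_big_seq (fun i => i%:R^-1)); last first.
  by move=> i /(allP s_pos) i_pos; apply: rising_binom_divX0.
rewrite prodfV -natr_prod => ratio_int; apply: (dvdn_of_int_ratio _ ratio_int).
by rewrite big_seq prodn_cond_gt0 // => i /(allP s_pos).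
Qed.

Local Close Scope ring_scope.

Theorem theorem3 (n k c : nat) : (k <= n)%N -> is_c n k c -> q n k %| k`! * c.
Proof.
move=> _ [_ [c_admissible _]].
apply/dvdn_biglcmP => t /andP [t_pos sum_le_n].
rewrite -(big_map val xpredT (fun i => i)).
apply: (prod_dvd_fact_c c_admissible).
- by rewrite size_map size_tuple.
- by rewrite all_map.
- by rewrite big_map.
Qed.
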